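(* For every $\lambda\in[1/2,1)$, there is no maximally entangled state in the set $S(\lambda,1-\lambda,0,0)$ of two-qubit density matrices with spectrum $\{\lambda,1-\lambda,0,0\}$.
   Context: $\mathcal{D}$ denotes the set of two-qubit density matrices, i.e. $\rho\in\mathbb{C}^{4\times4}$ with $\rho=\rho^\dagger$, $\rho\ge 0$, $\mathrm{tr}\rho=1$, acting on $\mathbb{C}^2\otimes\mathbb{C}^2$. For eigenvalues $\lambda_1\ge\lambda_2\ge\lambda_3\ge\lambda_4\ge0$ with $\sum_i\lambda_i=1$, $S(\lambda_1,\lambda_2,\lambda_3,\lambda_4)=\{\rho\in\mathcal{D}:\text{the eigenvalues of }\rho\text{ (with multiplicity) are }\lambda_1,\lambda_2,\lambda_3,\lambda_4\}$. For a set $S\subseteq\mathcal{D}$, a state $\rho\in S$ is called a maximally entangled state in $S$ if for every $\sigma\in S$ there exists an LOCC map (a quantum channel implementable by local operations on each qubit and classical communication between the two parties) $\Lambda$ with $\Lambda(\rho)=\sigma$. *)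

From HB Require Import structures.
From mathcomp Require Import all_boot all_order all_algebra.
From mathcomp Require Import complex mxtens.
From mathcomp Require Import reals.
Set Implicit Arguments. Unset Strict Implicit. Unset Printing Implicit Defensive.
Import Order.TTheory GRing.Theory Num.Theory.
Local Open Scope ring_scope.

Section QInfo.
Variable R : realType.
Local Notation C := R[i].

Definition adjmx {m n : nat} (A : 'M[C]_(m, n)) : 'M[C]_(n, m) :=
  (map_mx Num.conj A)^T.

Definition is_density {d : nat} (rho : 'M[C]_d) : Prop :=
  [/\ adjmx rho = rho,
      (forall v : 'cV[C]_d, 0 <= (adjmx v *m rho *m v) 0 0)
    & \tr rho = 1].

(* two-qubit density matrices: C^4 = C^2 (x) C^2, first factor = Alice *)
Definition two_qubit_density (rho : 'M[C]_(2 * 2)) : Prop := is_density rho.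

(* S(l1,l2,l3,l4): density matrices whose eigenvalues, with (algebraic)
   multiplicity, are l1,l2,l3,l4, i.e. whose characteristic polynomial is
   prod_k (X - l_k). *)
Definition S_spec (l1 l2 l3 l4 : R) : 'M[C]_(2 * 2) -> Prop :=
  fun rho => two_qubit_density rho /\
    char_poly rho = \prod_(a <- [:: real_complex R l1; real_complex R l2; real_complex R l3; real_complex R l4]) ('X - a%:P).

(* A protocol on a system of local
   dimensions (da, db) is a tree: at each node one party (Alice or Bob)
   performs a local measurement/operation given by Kraus operators
   K_0..K_{n-1} (possibly changing her/his local dimension) with
   sum_i K_i^* K_i = 1, broadcasts the outcome i, and the protocol continues
   with the sub-protocol (next i). *)
Inductive locc_protocol : nat -> nat -> Type :=
| LOCC_Leaf : locc_protocol 2 2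
| LOCC_Alice (da db da' n : nat) (K : 'I_n -> 'M[C]_(da', da))
    (complete : \sum_(i < n) adjmx (K i) *m K i = 1%:M)
    (next : 'I_n -> locc_protocol da' db) : locc_protocol da db
| LOCC_Bob (da db db' n : nat) (K : 'I_n -> 'M[C]_(db', db))
    (complete : \sum_(i < n) adjmx (K i) *m K i = 1%:M)
    (next : 'I_n -> locc_protocol da db') : locc_protocol da db.

Fixpoint locc_apply (da db : nat) (p : locc_protocol da db) :
    'M[C]_(da * db) -> 'M[C]_(2 * 2) :=
  match p in locc_protocol da db return 'M[C]_(da * db) -> 'M[C]_(2 * 2) with
  | LOCC_Leaf => fun rho => rho
  | @LOCC_Alice da db da' n K _ next => fun rho =>
      \sum_(i < n)
        locc_apply (next i)
          ((K i *t (1%:M : 'M[C]_db)) *m rho *m adjmx (K i *t (1%:M : 'M[C]_db)))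
  | @LOCC_Bob da db db' n K _ next => fun rho =>
      \sum_(i < n)
        locc_apply (next i)
          (((1%:M : 'M[C]_da) *t K i) *m rho *m adjmx ((1%:M : 'M[C]_da) *t K i))
  end.

Definition is_LOCC (Lam : 'M[C]_(2 * 2) -> 'M[C]_(2 * 2)) : Prop :=
  exists p : locc_protocol 2 2, forall X, Lam X = locc_apply p X.

Definition maximally_entangled_in (S : 'M[C]_(2 * 2) -> Prop)
    (rho : 'M[C]_(2 * 2)) : Prop :=
  S rho /\ forall sigma, S sigma ->
    exists Lam, is_LOCC Lam /\ Lam rho = sigma.

End QInfo.

From HB Require Import structures.
From mathcomp Require Import all_boot all_order all_algebra.
From mathcomp Require Import complex mxtens reals.
From mathcomp Require Import ring.
Import Order.TTheory GRing.Theory Num.Theory.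
Local Open Scope ring_scope.

(* An LOCC map is separable: it sends [rho] to a sum of terms
   [(A *t B) rho (A *t B)^*], and every vector [(A *t B) rho y] then lies in
   the range of the target state.  The symmetric bilinear form polarizing
   [v |-> det [v_ab]] on C^2 (x) C^2 is multiplied by [det A det B] under
   [A *t B], so whether it degenerates on the span of two vectors is invariant
   under invertible local operators.  Two targets in S(lam, 1 - lam, 0, 0) are
   used: [lam/2 |Phi><Phi| + (1 - lam) |01><01|], on whose range the form is
   degenerate, and [lam |00><00| + (1 - lam)/3 |w><w|] with
   [w = |01> + |10> + |11>], on whose range it is not.  Both are entangled: if
   all Kraus products of a protocol were singular, its output vectors would be
   product vectors, and these cannot produce the targets.  Hence each target is
   reached through some invertible [A *t B], which maps two independent range
   vectors of [rho] (they exist since [0 < lam < 1]) to its range; the Gram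
   determinant of the form on them must then both vanish and not vanish. *)

Set Implicit Arguments. Unset Strict Implicit. Unset Printing Implicit Defensive.

Section Adjoint.
Variable R : realType.
Local Notation C := R[i].

Lemma adjmxE m n (A : 'M[C]_(m, n)) i j : adjmx A i j = (A j i)^*.
Proof. by rewrite /adjmx !mxE. Qed.

Lemma adjmxK m n (A : 'M[C]_(m, n)) : adjmx (adjmx A) = A.
Proof. by apply/matrixP => i j; rewrite !adjmxE conjCK. Qed.

Lemma adjmxM m n p (A : 'M[C]_(m, n)) (B : 'M[C]_(n, p)) :
  adjmx (A *m B) = adjmx B *m adjmx A.
Proof.
apply/matrixP => i j; rewrite !adjmxE !mxE rmorph_sum; apply: eq_bigr => k _.
by rewrite !adjmxE rmorphM mulrC.
Qed.

Lemma adjmxD m n (A B : 'M[C]_(m, n)) : adjmx (A + B) = adjmx A + adjmx B.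
Proof. by apply/matrixP => i j; rewrite !adjmxE !mxE rmorphD. Qed.

Lemma adjmxZ m n (a : C) (A : 'M[C]_(m, n)) : adjmx (a *: A) = a^* *: adjmx A.
Proof. by apply/matrixP => i j; rewrite !adjmxE !mxE rmorphM. Qed.

Lemma adjmx0 m n : adjmx (0 : 'M[C]_(m, n)) = 0.
Proof. by apply/matrixP => i j; rewrite adjmxE !mxE conjC0. Qed.

Lemma adjmx1 n : adjmx (1%:M : 'M[C]_n) = 1%:M.
Proof. by apply/matrixP => i j; rewrite !adjmxE !mxE rmorph_nat eq_sym. Qed.

Lemma adjmx_delta n (i : 'I_n) : adjmx (delta_mx i 0 : 'cV[C]_n) = delta_mx 0 i.
Proof. by apply/matrixP => a b; rewrite adjmxE !mxE rmorph_nat andbC. Qed.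

Definition hermmx n (P : 'M[C]_n) := adjmx P = P.

Definition psdmx n (P : 'M[C]_n) :=
  forall v : 'cV[C]_n, 0 <= (adjmx v *m P *m v) 0 0.

Definition cdot n (u v : 'cV[C]_n) : C := (adjmx u *m v) 0 0.

Lemma conj_cdot n (u v : 'cV[C]_n) : (cdot u v)^* = cdot v u.
Proof. by rewrite /cdot -adjmxE adjmxM adjmxK. Qed.

Lemma cdotDl n (u v w : 'cV[C]_n) : cdot (u + v) w = cdot u w + cdot v w.
Proof. by rewrite /cdot adjmxD mulmxDl mxE. Qed.

Lemma cdotDr n (u v w : 'cV[C]_n) : cdot u (v + w) = cdot u v + cdot u w.
Proof. by rewrite /cdot mulmxDr mxE. Qed.

Lemma cdotZl n a (u v : 'cV[C]_n) : cdot (a *: u) v = a^* * cdot u v.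
Proof. by rewrite /cdot adjmxZ -scalemxAl mxE. Qed.

Lemma cdotZr n a (u v : 'cV[C]_n) : cdot u (a *: v) = a * cdot u v.
Proof. by rewrite /cdot -scalemxAr mxE. Qed.

Lemma cdot_adjmx n m (M : 'M[C]_(n, m)) u v : cdot u (M *m v) = cdot (adjmx M *m u) v.
Proof. by rewrite /cdot adjmxM adjmxK mulmxA. Qed.

Lemma herm_cdot n (P : 'M[C]_n) (x y : 'cV[C]_n) :
  hermmx P -> (cdot x (P *m y))^* = cdot y (P *m x).
Proof. by move=> hP; rewrite conj_cdot /cdot adjmxM hP mulmxA. Qed.

Lemma psdmx_cdot n (P : 'M[C]_n) (v : 'cV[C]_n) : psdmx P -> 0 <= cdot v (P *m v).
Proof. by move=> pP; rewrite /cdot mulmxA. Qed.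

Lemma cdot_delta n (i : 'I_n) (v : 'cV[C]_n) : cdot (delta_mx i 0) v = v i 0.
Proof. by rewrite /cdot adjmx_delta -rowE mxE. Qed.

Lemma cdot_self_eq0 n (v : 'cV[C]_n) : (cdot v v == 0) = (v == 0).
Proof.
apply/eqP/eqP => [|->]; last by rewrite /cdot mulmx0 mxE.
rewrite /cdot mxE => /eqP; rewrite psumr_eq0 => [/allP v0|k _]; last first.
  by rewrite adjmxE mulrC mul_conjC_ge0.
apply/matrixP => k j; rewrite [j]ord1 mxE.
by have /implyP/(_ isT) := v0 k (mem_index_enum k); rewrite adjmxE mulrC mul_conjC_eq0 => /eqP.
Qed.

(* With [t = - c / (d + 1)] the form equals [- |c|^2 (d + 2) / (d + 1)^2]. *)
Lemma sesqui_ge0_eq0 (c d : C) : 0 <= d ->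
  (forall t, 0 <= t * c^* + t^* * c + t^* * t * d) -> c = 0.
Proof.
move=> d_ge0 form_ge0.
have d_real : d^* = d by apply: geC0_conj.
have d1_gt0 : 0 < d + 1 by rewrite ltr_wpDl.
have := form_ge0 (- c / (d + 1)).
have -> : (- c / (d + 1)) * c^* + (- c / (d + 1))^* * c +
    (- c / (d + 1))^* * (- c / (d + 1)) * d
    = - (c * c^*) * ((d + 2) / (d + 1) ^+ 2).
  have -> : (- c / (d + 1))^* = - c^* / (d + 1).
    by rewrite -{2}d_real fmorph_div rmorphN rmorphD rmorph1.
  by field; rewrite gt_eqF.
rewrite pmulr_lge0 ?divr_gt0 ?exprn_gt0 ?ltr_wpDl // oppr_ge0 => cc_le0.
have /eqP : c * c^* = 0 by apply/eqP; rewrite eq_le cc_le0 mul_conjC_ge0.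
by rewrite mul_conjC_eq0 => /eqP.
Qed.

Lemma psd_quad_eq0 n (P : 'M[C]_n) (y : 'cV[C]_n) :
  hermmx P -> psdmx P -> cdot y (P *m y) = 0 -> P *m y = 0.
Proof.
move=> hP pP yPy0.
suff xPy0 x : cdot x (P *m y) = 0.
  by apply/matrixP => i j; rewrite [j]ord1 -cdot_delta xPy0 mxE.
apply: (@sesqui_ge0_eq0 _ (cdot x (P *m x))); first exact: psdmx_cdot.
move=> t; have := psdmx_cdot (y + t *: x) pP.
rewrite mulmxDr -scalemxAr cdotDl !cdotDr !cdotZl !cdotZr yPy0 -(herm_cdot x y hP).
by congr (0 <= _); ring.
Qed.

End Adjoint.

Lemma char_poly_diag_similar (F : fieldType) n (S U V : 'M[F]_n) (d : 'rV[F]_n) :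
  S *m U = U *m diag_mx d -> V *m U = 1%:M ->
  char_poly S = \prod_(i < n) ('X - (d 0 i)%:P).
Proof.
move=> SU VU.
have detU : (\det U)%:P != 0 :> {poly F}.
  rewrite polyC_eq0; apply/eqP => detU0; have := congr1 determinant VU.
  by rewrite det_mulmx detU0 mulr0 det1 => /eqP; rewrite eq_sym oner_eq0.
have : char_poly_mx S *m map_mx polyC U = map_mx polyC U *m char_poly_mx (diag_mx d).
  by rewrite /char_poly_mx mulmxBl mulmxBr -scalar_mxC -!map_mxM SU.
move/(congr1 determinant); rewrite !det_mulmx det_map_mx mulrC => /(mulfI detU) cpS.
rewrite /char_poly cpS -/(char_poly _) char_poly_trig ?diag_mx_is_trig //.
by apply: eq_bigr => i _; rewrite mxE eqxx mulr1n.
Qed.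

Section Eigenbasis.
Variable R : realType.
Local Notation C := R[i].

Lemma char_poly_orthogonal_eigenbasis n (S : 'M[C]_n)
    (c : 'I_n -> 'cV[C]_n) (d : 'I_n -> C) :
  (forall j, S *m c j = d j *: c j) ->
  (forall i j, i != j -> cdot (c i) (c j) = 0) ->
  (forall j, c j != 0) ->
  char_poly S = \prod_j ('X - (d j)%:P).
Proof.
move=> Sc orth c_nz.
pose U := \matrix_(i, j) c j i 0.
pose V := \matrix_(i, j) ((cdot (c i) (c i))^-1 * (c i j 0)^*).
rewrite (@char_poly_diag_similar _ _ S U V (\row_j d j)).
- by apply: eq_bigr => j _; rewrite mxE.
- apply/matrixP => i j; rewrite mul_mx_diag !mxE.
  have /matrixP/(_ i 0) := Sc j; rewrite !mxE mulrC => <-.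
  by apply: eq_bigr => k _; rewrite mxE.
apply/matrixP => i j; rewrite !mxE.
have -> : \sum_k V i k * U k j = (cdot (c i) (c i))^-1 * cdot (c i) (c j).
  rewrite [cdot _ (c j)]/cdot mxE mulr_sumr; apply: eq_bigr => k _.
  by rewrite !mxE mulrA.
have [<-|/orth ->] := eqVneq i j; first by rewrite mulVf ?cdot_self_eq0.
by rewrite mulr0.
Qed.

End Eigenbasis.

Section RankTwoMx.
Variable R : realType.
Local Notation C := R[i].

Definition rank2mx n (a b : C) (u w : 'cV[C]_n) : 'M[C]_n :=
  a *: (u *m adjmx u) + b *: (w *m adjmx w).

Lemma rank2mxE n a b (u w : 'cV[C]_n) i j :
  rank2mx a b u w i j = a * (u i 0 * (u j 0)^*) + b * (w i 0 * (w j 0)^*).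
Proof. by rewrite /rank2mx !mxE !big_ord1 !adjmxE. Qed.

Lemma rank2mx_mul n a b (u w v : 'cV[C]_n) :
  rank2mx a b u w *m v = (a * cdot u v) *: u + (b * cdot w v) *: w.
Proof.
rewrite /rank2mx mulmxDl -!scalemxAl -!mulmxA.
by rewrite [adjmx u *m v]mx11_scalar [adjmx w *m v]mx11_scalar !mul_mx_scalar !scalerA.
Qed.

Lemma rank2mx_herm n a b (u w : 'cV[C]_n) :
  a^* = a -> b^* = b -> hermmx (rank2mx a b u w).
Proof. by move=> ha hb; rewrite /hermmx adjmxD !adjmxZ !adjmxM !adjmxK ha hb. Qed.

Lemma rank2mx_psd n a b (u w : 'cV[C]_n) :
  0 <= a -> 0 <= b -> psdmx (rank2mx a b u w).
Proof.
move=> a_ge0 b_ge0 v; rewrite -mulmxA rank2mx_mul -/(cdot v _) cdotDr !cdotZr.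
rewrite -(conj_cdot u v) -(conj_cdot w v) -!mulrA.
by rewrite addr_ge0 // mulr_ge0 // mul_conjC_ge0.
Qed.

Lemma rank2mx_tr n a b (u w : 'cV[C]_n) :
  \tr (rank2mx a b u w) = a * cdot u u + b * cdot w w.
Proof.
by rewrite /rank2mx mxtraceD !mxtraceZ (mxtrace_mulC u) (mxtrace_mulC w) !trace_mx11.
Qed.

End RankTwoMx.

Lemma det_mx2 (T : comNzRingType) (A : 'M[T]_2) : \det A = A 0 0 * A 1 1 - A 0 1 * A 1 0.
Proof.
rewrite (expand_det_row _ 0) !big_ord_recl big_ord0 /cofactor !det_mx11 !mxE /=.
rewrite !expr0 !expr1 addr0 mul1r mulN1r mulrN.
by congr (A _ _ * A _ _ - A _ _ * A _ _); apply: val_inj.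
Qed.

Definition tix (a b : 'I_2) : 'I_(2 * 2) := mxtens_index (a, b).

Lemma ord2P (a : 'I_2) : a = 0 \/ a = 1.
Proof. by case: a => [[|[|n]] // lt_a2]; [left | right]; apply: val_inj. Qed.

Lemma tix_eq a b c d : (tix a b == tix c d) = (a == c) && (b == d).
Proof. by rewrite (inj_eq (can_inj (@mxtens_indexK 2 2))) xpair_eqE. Qed.

Lemma tixP (P : 'I_(2 * 2) -> Prop) :
  P (tix 0 0) -> P (tix 0 1) -> P (tix 1 0) -> P (tix 1 1) -> forall k, P k.
Proof.
move=> P00 P01 P10 P11 k; case: (mxtens_indexP k) => a b.
by case: (ord2P a) => ->; case: (ord2P b) => ->.
Qed.

Lemma big_tix T (idx : T) (op : Monoid.law idx) (F : 'I_(2 * 2) -> T) :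
  \big[op/idx]_k F k = op (op (op (F (tix 0 0)) (F (tix 0 1))) (F (tix 1 0))) (F (tix 1 1)).
Proof.
rewrite !big_ord_recl big_ord0 Monoid.mulm1 !Monoid.mulmA.
by congr (op (op (op (F _) (F _)) (F _)) (F _)); apply: val_inj.
Qed.

Definition on4 T (x00 x01 x10 x11 : T) (k : 'I_(2 * 2)) : T :=
  if k == tix 0 0 then x00 else if k == tix 0 1 then x01
  else if k == tix 1 0 then x10 else x11.

Lemma on4E T (x00 x01 x10 x11 : T) :
  (on4 x00 x01 x10 x11 (tix 0 0) = x00) * (on4 x00 x01 x10 x11 (tix 0 1) = x01)
  * (on4 x00 x01 x10 x11 (tix 1 0) = x10) * (on4 x00 x01 x10 x11 (tix 1 1) = x11).
Proof. by rewrite /on4 !tix_eq. Qed.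

Section TwoQubits.
Variable R : realType.
Local Notation C := R[i].

Definition v4 (x00 x01 x10 x11 : C) : 'cV[C]_(2 * 2) :=
  \col_k on4 x00 x01 x10 x11 k.

Lemma v4E x00 x01 x10 x11 k : v4 x00 x01 x10 x11 k 0 = on4 x00 x01 x10 x11 k.
Proof. by rewrite mxE. Qed.

Lemma v4_eq0 x00 x01 x10 x11 :
  (v4 x00 x01 x10 x11 == 0) = [&& x00 == 0, x01 == 0, x10 == 0 & x11 == 0].
Proof.
apply/eqP/and4P => [/matrixP v0 | [/eqP e00 /eqP e01 /eqP e10 /eqP e11]].
  split; apply/eqP; [move: (v0 (tix 0 0) 0) | move: (v0 (tix 0 1) 0)
    | move: (v0 (tix 1 0) 0) | move: (v0 (tix 1 1) 0)]; by rewrite !mxE on4E.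
by apply/matrixP => k j; rewrite [j]ord1 !mxE; move: k; apply: tixP; rewrite on4E.
Qed.

Lemma cV4P (v w : 'cV[C]_(2 * 2)) :
  v (tix 0 0) 0 = w (tix 0 0) 0 -> v (tix 0 1) 0 = w (tix 0 1) 0 ->
  v (tix 1 0) 0 = w (tix 1 0) 0 -> v (tix 1 1) 0 = w (tix 1 1) 0 -> v = w.
Proof.
by move=> e00 e01 e10 e11; apply/matrixP => k j; rewrite [j]ord1; move: k; apply: tixP.
Qed.

Lemma cdot4 (u v : 'cV[C]_(2 * 2)) : cdot u v =
  (u (tix 0 0) 0)^* * v (tix 0 0) 0 + (u (tix 0 1) 0)^* * v (tix 0 1) 0 +
  (u (tix 1 0) 0)^* * v (tix 1 0) 0 + (u (tix 1 1) 0)^* * v (tix 1 1) 0.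
Proof. by rewrite /cdot mxE big_tix !adjmxE. Qed.

Lemma tens_mulmxE (A B : 'M[C]_2) (v : 'cV[C]_(2 * 2)) a b :
  ((A *t B) *m v) (tix a b) 0 =
  A a 0 * B b 0 * v (tix 0 0) 0 + A a 0 * B b 1 * v (tix 0 1) 0 +
  A a 1 * B b 0 * v (tix 1 0) 0 + A a 1 * B b 1 * v (tix 1 1) 0.
Proof. by rewrite mxE big_tix /tix !tensmxE. Qed.

Lemma tens_mulmx_inj (A B : 'M[C]_2) :
  \det A * \det B != 0 -> injective (mulmx (A *t B) : 'cV[C]_(2 * 2) -> _).
Proof.
rewrite mulf_eq0 negb_or => /andP[detA detB].
by apply: can_inj (mulKmx _); rewrite tensmx_unit // unitmxE unitfE.
Qed.

Lemma char_poly_eigenbasis4 (S : 'M[C]_(2 * 2)) c00 c01 c10 c11 (d00 d01 d10 d11 : C) :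
  let c := on4 c00 c01 c10 c11 in
  S *m c00 = d00 *: c00 -> S *m c01 = d01 *: c01 ->
  S *m c10 = d10 *: c10 -> S *m c11 = d11 *: c11 ->
  (forall i j, i != j -> cdot (c i) (c j) = 0) -> (forall j, c j != 0) ->
  char_poly S = \prod_(a <- [:: d00; d01; d10; d11]) ('X - a%:P).
Proof.
move=> c S00 S01 S10 S11 orth c_nz.
rewrite (@char_poly_orthogonal_eigenbasis _ _ S c (on4 d00 d01 d10 d11)) //.
  by rewrite big_tix !on4E !big_cons big_nil mulr1 !mulrA.
by apply: tixP; rewrite /c !on4E.
Qed.

End TwoQubits.

Section DetForm.
Variable R : realType.
Local Notation C := R[i].

(* The polarization of [v |-> 2 det [v_ab]_ab]: since [A *t B] acts on the
   coefficient matrix of [v] by [M |-> A M B^T], it scales by [det A det B]. *)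
Definition detform (v w : 'cV[C]_(2 * 2)) : C :=
  v (tix 0 0) 0 * w (tix 1 1) 0 + v (tix 1 1) 0 * w (tix 0 0) 0
  - v (tix 0 1) 0 * w (tix 1 0) 0 - v (tix 1 0) 0 * w (tix 0 1) 0.

Lemma detform_tens (A B : 'M[C]_2) v w :
  detform ((A *t B) *m v) ((A *t B) *m w) = \det A * \det B * detform v w.
Proof. by rewrite /detform !tens_mulmxE !det_mx2; ring. Qed.

Definition detgram (v w : 'cV[C]_(2 * 2)) : C :=
  detform v v * detform w w - detform v w ^+ 2.

Lemma detgram_tens (A B : 'M[C]_2) v w :
  detgram ((A *t B) *m v) ((A *t B) *m w) = (\det A * \det B) ^+ 2 * detgram v w.
Proof. by rewrite /detgram !detform_tens; ring. Qed.

(* The ranges of [sigma_bell] and [sigma_prod] below: the spans of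
   [{|00> + |11>, |01>}] and of [{|00>, |01> + |10> + |11>}]. *)
Definition bell_span (w : 'cV[C]_(2 * 2)) :=
  w (tix 1 0) 0 = 0 /\ w (tix 0 0) 0 = w (tix 1 1) 0.

Definition prod_span (w : 'cV[C]_(2 * 2)) :=
  w (tix 0 1) 0 = w (tix 1 1) 0 /\ w (tix 1 0) 0 = w (tix 1 1) 0.

Lemma detform_bell_span w : bell_span w -> detform w w = 2 * w (tix 0 0) 0 ^+ 2.
Proof. by case=> w10 w11; rewrite /detform w10 -w11; ring. Qed.

Lemma detform_prod_span w :
  prod_span w -> detform w w = 2 * w (tix 1 1) 0 * (w (tix 0 0) 0 - w (tix 1 1) 0).
Proof. by case=> w01 w10; rewrite /detform w01 w10; ring. Qed.

Lemma detgram_bell_span w1 w2 : bell_span w1 -> bell_span w2 -> detgram w1 w2 = 0.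
Proof. by case=> a1 b1 [a2 b2]; rewrite /detgram /detform a1 a2 b1 b2; ring. Qed.

Lemma detgram_prod_span w1 w2 : prod_span w1 -> prod_span w2 ->
  detgram w1 w2 = - (w1 (tix 0 0) 0 * w2 (tix 1 1) 0 - w2 (tix 0 0) 0 * w1 (tix 1 1) 0) ^+ 2.
Proof. by case=> a1 b1 [a2 b2]; rewrite /detgram /detform a1 a2 b1 b2; ring. Qed.

(* On [prod_span] the form is nondegenerate, so [detgram] detects dependence. *)
Lemma detgram_prod_span_eq0 w1 w2 : prod_span w1 -> prod_span w2 ->
  detgram w1 w2 = 0 -> w1 = 0 \/ exists c, w2 = c *: w1.
Proof.
move=> [a1 b1] [a2 b2]; rewrite detgram_prod_span // => /eqP.
rewrite oppr_eq0 expf_eq0 /= subr_eq0 => /eqP cross.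
have [y1_0|y1_nz] := eqVneq (w1 (tix 1 1) 0) 0.
  have [x1_0|x1_nz] := eqVneq (w1 (tix 0 0) 0) 0.
    by left; apply: cV4P; rewrite !mxE ?a1 ?b1 ?x1_0 ?y1_0.
  have /eqP : w1 (tix 0 0) 0 * w2 (tix 1 1) 0 = 0 by rewrite cross y1_0 mulr0.
  rewrite mulf_eq0 (negbTE x1_nz) => /eqP y2_0.
  right; exists (w2 (tix 0 0) 0 / w1 (tix 0 0) 0).
  by apply: cV4P; rewrite !mxE ?a1 ?b1 ?a2 ?b2 ?y1_0 ?y2_0 ?mulr0 ?divfK.
right; exists (w2 (tix 1 1) 0 / w1 (tix 1 1) 0).
apply: cV4P; rewrite !mxE ?a1 ?b1 ?a2 ?b2 ?divfK //.
by apply: (mulIf y1_nz); rewrite -cross; field.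
Qed.

End DetForm.

Section Kraus.
Variable R : realType.
Local Notation C := R[i].

Lemma tensmx11 m n : (1%:M : 'M[C]_m) *t (1%:M : 'M[C]_n) = 1%:M.
Proof.
apply/matrixP => i j.
case: (mxtens_indexP i) => a b; case: (mxtens_indexP j) => c d.
rewrite tensmxE !mxE (inj_eq (can_inj (@mxtens_indexK m n))) xpair_eqE.
by case: (a == c); case: (b == d); rewrite ?mulr1 ?mulr0.
Qed.

Fixpoint locc_kraus da db (p : locc_protocol R da db) {struct p} :
    seq ('M[C]_(2, da) * 'M[C]_(2, db)) :=
  match p in locc_protocol _ da db return seq ('M[C]_(2, da) * 'M[C]_(2, db)) with
  | LOCC_Leaf => [:: (1%:M, 1%:M)]
  | @LOCC_Alice _ da db da' n K _ next =>
      [seq (AB.1 *m K i, AB.2) | i <- enum 'I_n, AB <- locc_kraus (next i)]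
  | @LOCC_Bob _ da db db' n K _ next =>
      [seq (AB.1, AB.2 *m K i) | i <- enum 'I_n, AB <- locc_kraus (next i)]
  end.

Definition kraus_term da db (AB : 'M[C]_(2, da) * 'M[C]_(2, db)) X :=
  (AB.1 *t AB.2) *m X *m adjmx (AB.1 *t AB.2).

Lemma locc_apply_kraus da db (p : locc_protocol R da db) X :
  locc_apply p X = \sum_(AB <- locc_kraus p) kraus_term AB X.
Proof.
elim: p X => [|a b a' n K _ next IH|a b b' n K _ next IH] X /=.
- by rewrite big_seq1 /kraus_term /= tensmx11 adjmx1 mul1mx mulmx1.
- rewrite big_allpairs_dep /= big_enum /=; apply: eq_bigr => i _.
  rewrite IH; apply: eq_bigr => AB _; rewrite /kraus_term /=.
  have -> : (AB.1 *m K i) *t AB.2 = (AB.1 *t AB.2) *m (K i *t 1%:M).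
    by rewrite tensmx_mul mulmx1.
  by rewrite adjmxM !mulmxA.
- rewrite big_allpairs_dep /= big_enum /=; apply: eq_bigr => i _.
  rewrite IH; apply: eq_bigr => AB _; rewrite /kraus_term /=.
  have -> : AB.1 *t (AB.2 *m K i) = (AB.1 *t AB.2) *m (1%:M *t K i).
    by rewrite tensmx_mul mulmx1.
  by rewrite adjmxM !mulmxA.
Qed.

Lemma is_LOCC_kraus (Lam : 'M[C]_(2 * 2) -> 'M[C]_(2 * 2)) rho :
  is_LOCC Lam -> exists s, Lam rho = \sum_(AB <- s) kraus_term AB rho.
Proof. by case=> p ->; exists (locc_kraus p); rewrite locc_apply_kraus. Qed.

Lemma kraus_term_herm (AB : 'M[C]_2 * 'M[C]_2) rho :
  hermmx rho -> hermmx (kraus_term AB rho).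
Proof. by move=> hr; rewrite /hermmx /kraus_term !adjmxM adjmxK hr mulmxA. Qed.

Lemma kraus_term_psd (AB : 'M[C]_2 * 'M[C]_2) rho :
  psdmx rho -> psdmx (kraus_term AB rho).
Proof.
move=> pr v; have := pr (adjmx (AB.1 *t AB.2) *m v).
by rewrite /kraus_term adjmxM adjmxK !mulmxA.
Qed.

Section Outputs.
Variables (rho : 'M[C]_(2 * 2)) (s : seq ('M[C]_2 * 'M[C]_2)).
Hypotheses (rho_herm : hermmx rho) (rho_psd : psdmx rho).
Local Notation out AB y := ((AB.1 *t AB.2) *m (rho *m y)).

Lemma kraus_termE (AB : 'M[C]_2 * 'M[C]_2) i j :
  kraus_term AB rho i j = (out AB (adjmx (AB.1 *t AB.2) *m (delta_mx j 0 : 'cV_(2 * 2)))) i 0.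
Proof. by rewrite /kraus_term !mulmxA -colE [RHS]mxE. Qed.

Lemma kraus_out_orth sigma g AB y :
  sigma = \sum_(AB <- s) kraus_term AB rho -> sigma *m g = 0 -> AB \in s ->
  cdot g (out AB y) = 0.
Proof.
move=> sigmaE sigma_g AB_s.
have : cdot g (sigma *m g) = 0 by rewrite sigma_g /cdot mulmx0 mxE.
rewrite sigmaE mulmx_suml /cdot mulmx_sumr summxE.
move/eqP; rewrite psumr_eq0 => [/allP/(_ AB AB_s)/eqP|AB' _]; last first.
  by rewrite mulmxA; apply: kraus_term_psd.
rewrite -/(cdot g _) => term0.
have rho_Kg : rho *m (adjmx (AB.1 *t AB.2) *m g) = 0.
  by apply: psd_quad_eq0 => //; rewrite -term0 -cdot_adjmx /kraus_term /cdot !mulmxA.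
by rewrite cdot_adjmx -(herm_cdot y _ rho_herm) rho_Kg /cdot mulmx0 mxE rmorph0.
Qed.

End Outputs.
End Kraus.

Section Targets.
Variable R : realType.
Local Notation C := R[i].
Local Notation "x %:C" := (real_complex R x).
Variable lam : R.

Ltac v4_compute :=
  apply: cV4P; rewrite ?rank2mx_mul ?cdot4 !mxE !on4E ?conjC0 ?conjC1 ?conjCN1.

Definition sigma_bell := rank2mx (lam%:C / 2) (1 - lam%:C) (v4 1 0 0 1) (v4 0 1 0 0).

Lemma sigma_bell_ker10 : sigma_bell *m v4 0 0 1 0 = 0.
Proof. by v4_compute; ring. Qed.

Lemma sigma_bell_ker_psi : sigma_bell *m v4 1 0 0 (-1) = 0.
Proof. by v4_compute; ring. Qed.

Lemma sigma_bell00 : sigma_bell (tix 0 0) (tix 0 0) = lam%:C / 2.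
Proof. by rewrite rank2mxE !mxE !on4E conjC0 conjC1; ring. Qed.

Definition sigma_prod := rank2mx lam%:C ((1 - lam%:C) / 3) (v4 1 0 0 0) (v4 0 1 1 1).

Lemma sigma_prod_ker_psi : sigma_prod *m v4 0 1 (-1) 0 = 0.
Proof. by v4_compute; ring. Qed.

Lemma sigma_prod_ker_w : sigma_prod *m v4 0 1 1 (-2) = 0.
Proof. by v4_compute; ring. Qed.

Lemma sigma_prod01 :
  sigma_prod (tix 0 0) (tix 0 1) = 0 /\ sigma_prod (tix 0 1) (tix 0 1) = (1 - lam%:C) / 3.
Proof. by split; rewrite rank2mxE !mxE !on4E conjC0 conjC1; ring. Qed.

Hypothesis lam01 : 0 <= lam <= 1.

Let lamC_ge0 : 0 <= lam%:C.
Proof. by rewrite ler0c; case/andP: lam01. Qed.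

Let lamC_le1 : 0 <= 1 - lam%:C.
Proof. by rewrite -(rmorph1 (real_complex R)) -rmorphB ler0c subr_ge0; case/andP: lam01. Qed.

Let spec_list :
  [:: lam%:C; (1 - lam)%:C; 0%:C; 0%:C] = [:: lam%:C; 1 - lam%:C; 0; 0].
Proof. by rewrite rmorphB rmorph1 rmorph0. Qed.

Lemma sigma_bell_spec : S_spec lam (1 - lam) 0 0 sigma_bell.
Proof.
split; first split.
- by apply: rank2mx_herm; apply: geC0_conj; rewrite ?divr_ge0.
- by apply: rank2mx_psd; rewrite ?divr_ge0.
- by rewrite rank2mx_tr !cdot4 !mxE !on4E conjC0 conjC1; field.
rewrite spec_list.
apply: (char_poly_eigenbasis4 (c00 := v4 1 0 0 1) (c01 := v4 0 1 0 0)
   (c10 := v4 1 0 0 (-1)) (c11 := v4 0 0 1 0)).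
- by v4_compute; field.
- by v4_compute; ring.
- by rewrite scale0r sigma_bell_ker_psi.
- by rewrite scale0r sigma_bell_ker10.
- apply: tixP; apply: tixP; rewrite ?eqxx // => _;
    by rewrite cdot4 !on4E !mxE !on4E ?conjC0 ?conjC1 ?conjCN1; ring.
- by apply: tixP; rewrite on4E v4_eq0 oner_eq0 ?andbF.
Qed.

Lemma sigma_prod_spec : S_spec lam (1 - lam) 0 0 sigma_prod.
Proof.
split; first split.
- by apply: rank2mx_herm; apply: geC0_conj; rewrite ?divr_ge0.
- by apply: rank2mx_psd; rewrite ?divr_ge0.
- by rewrite rank2mx_tr !cdot4 !mxE !on4E conjC0 conjC1; field.
rewrite spec_list.
apply: (char_poly_eigenbasis4 (c00 := v4 1 0 0 0) (c01 := v4 0 1 1 1)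
   (c10 := v4 0 1 (-1) 0) (c11 := v4 0 1 1 (-2))).
- by v4_compute; ring.
- by v4_compute; field.
- by rewrite scale0r sigma_prod_ker_psi.
- by rewrite scale0r sigma_prod_ker_w.
- apply: tixP; apply: tixP; rewrite ?eqxx // => _;
    by rewrite cdot4 !on4E !mxE !on4E ?conjC0 ?conjC1 ?conjCN1 ?rmorphN ?conjC_nat; ring.
- by apply: tixP; rewrite on4E v4_eq0 oner_eq0 ?andbF.
Qed.

End Targets.

Section RangeInvariant.
Variable R : realType.
Local Notation C := R[i].
Variables (rho : 'M[C]_(2 * 2)) (s : seq ('M[C]_2 * 'M[C]_2)) (lam : R).
Hypotheses (rho_herm : hermmx rho) (rho_psd : psdmx rho).
Local Notation out AB y := ((AB.1 *t AB.2) *m (rho *m y)).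
Local Notation unit_kraus := (fun AB : 'M[C]_2 * 'M[C]_2 => \det AB.1 * \det AB.2 != 0).

Section Bell.
Hypothesis sigmaE : sigma_bell lam = \sum_(AB <- s) kraus_term AB rho.

Lemma bell_kraus_out AB y : AB \in s -> bell_span (out AB y).
Proof.
move=> AB_s.
have := kraus_out_orth rho_herm rho_psd y sigmaE (sigma_bell_ker10 lam) AB_s.
have := kraus_out_orth rho_herm rho_psd y sigmaE (sigma_bell_ker_psi lam) AB_s.
rewrite !cdot4 !v4E !on4E ?conjC0 ?conjC1 ?conjCN1 => psi_orth e10_orth.
split; first by rewrite -e10_orth; ring.
by apply/eqP; rewrite -subr_eq0; apply/eqP; rewrite -psi_orth; ring.
Qed.

Lemma bell_kraus_unit : lam != 0 -> has unit_kraus s.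
Proof.
move=> lam_nz; apply: contraT => /hasPn singular.
have : sigma_bell lam (tix 0 0) (tix 0 0) = 0.
  rewrite sigmaE summxE big_seq big1 // => AB AB_s.
  rewrite kraus_termE; set y := adjmx _ *m _.
  have := detform_tens AB.1 AB.2 (rho *m y) (rho *m y).
  rewrite (eqP (negbNE (singular AB AB_s))) mul0r (detform_bell_span (bell_kraus_out _ AB_s)).
  by move/eqP; rewrite mulf_eq0 pnatr_eq0 expf_eq0 /= => /eqP.
rewrite sigma_bell00 => /eqP; rewrite mulf_eq0 invr_eq0 pnatr_eq0 orbF.
by rewrite -(rmorph0 (real_complex R)) (inj_eq (@complexI _)) (negbTE lam_nz).
Qed.

Lemma detgram_range_bell y1 y2 : lam != 0 -> detgram (rho *m y1) (rho *m y2) = 0.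
Proof.
move=> lam_nz; have /hasP[AB AB_s unitAB] := bell_kraus_unit lam_nz.
have := detgram_tens AB.1 AB.2 (rho *m y1) (rho *m y2).
rewrite (detgram_bell_span (bell_kraus_out _ AB_s) (bell_kraus_out _ AB_s)) => /esym/eqP.
by rewrite mulf_eq0 expf_eq0 /= (negbTE unitAB) => /eqP.
Qed.

End Bell.

Section Prod.
Hypothesis sigmaE : sigma_prod lam = \sum_(AB <- s) kraus_term AB rho.

Lemma prod_kraus_out AB y : AB \in s -> prod_span (out AB y).
Proof.
move=> AB_s.
have := kraus_out_orth rho_herm rho_psd y sigmaE (sigma_prod_ker_psi lam) AB_s.
have := kraus_out_orth rho_herm rho_psd y sigmaE (sigma_prod_ker_w lam) AB_s.
rewrite !cdot4 !v4E !on4E ?conjC0 ?conjC1 ?conjCN1 ?rmorphN ?conjC_nat => w_orth psi_orth.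
have e10 : out AB y (tix 1 0) 0 = out AB y (tix 0 1) 0.
  by apply/eqP; rewrite eq_sym -subr_eq0; apply/eqP; rewrite -psi_orth; ring.
have /eqP : 2 * (out AB y (tix 0 1) 0 - out AB y (tix 1 1) 0) = 0.
  by rewrite -w_orth e10; ring.
by rewrite mulf_eq0 pnatr_eq0 /= subr_eq0 => /eqP e01; split; rewrite // e10.
Qed.

Lemma prod_kraus_unit : lam != 1 -> has unit_kraus s.
Proof.
move=> lam_n1; apply: contraT => /hasPn singular.
have : sigma_prod lam (tix 0 0) (tix 0 1) - sigma_prod lam (tix 0 1) (tix 0 1) = 0.
  rewrite sigmaE !summxE -sumrB big_seq big1 // => AB AB_s.
  rewrite !kraus_termE; set y := adjmx _ *m _.
  have [w01 w10] := prod_kraus_out y AB_s.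
  have := detform_tens AB.1 AB.2 (rho *m y) (rho *m y).
  rewrite (eqP (negbNE (singular AB AB_s))) mul0r (detform_prod_span (prod_kraus_out _ AB_s)).
  move/eqP; rewrite !mulf_eq0 pnatr_eq0 /= subr_eq0 => /orP[/eqP w11_0 | /eqP ->].
    have col0 : out AB y = 0.
      rewrite /y !mulmxA -/(kraus_term AB rho).
      apply: psd_quad_eq0; [exact: kraus_term_herm | exact: kraus_term_psd |].
      by rewrite cdot_delta -colE mxE kraus_termE w01 w11_0.
    by rewrite col0 !mxE subrr.
  by rewrite w01 subrr.
have [-> ->] := sigma_prod01 lam; rewrite sub0r => /eqP; rewrite oppr_eq0.
rewrite mulf_eq0 invr_eq0 pnatr_eq0 orbF subr_eq0.
by rewrite -(rmorph1 (real_complex R)) (inj_eq (@complexI _)) eq_sym (negbTE lam_n1).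
Qed.

Lemma detgram_range_prod y1 y2 : lam != 1 -> rho *m y1 != 0 ->
  (forall c, rho *m y2 != c *: (rho *m y1)) -> detgram (rho *m y1) (rho *m y2) != 0.
Proof.
move=> lam_n1 v1_nz indep; have /hasP[AB AB_s unitAB] := prod_kraus_unit lam_n1.
apply/eqP => gram0; have := detgram_tens AB.1 AB.2 (rho *m y1) (rho *m y2).
rewrite gram0 mulr0.
case/(detgram_prod_span_eq0 (prod_kraus_out _ AB_s) (prod_kraus_out _ AB_s)) => [|[c]].
  by rewrite -(mulmx0 _ (AB.1 *t AB.2)) => /(tens_mulmx_inj unitAB); apply/eqP.
by rewrite scalemxAr => /(tens_mulmx_inj unitAB); apply/eqP/indep.
Qed.

End Prod.
End RangeInvariant.

Section DensityRange.
Variable R : realType.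
Local Notation C := R[i].

Lemma herm_eigenvector n (rho : 'M[C]_n) (L : C) :
  hermmx rho -> L^* = L -> eigenvalue rho L -> exists2 a : 'cV_n, a != 0 & rho *m a = L *: a.
Proof.
move=> rho_herm L_real /eigenvalueP[v v_rho v_nz]; exists (adjmx v).
  by apply: contra v_nz => /eqP/(congr1 (@adjmx R _ _)); rewrite adjmxK adjmx0 => ->.
by rewrite -{1}rho_herm -adjmxM v_rho adjmxZ L_real.
Qed.

(* If every column of [rho] were a multiple of [a], then [rho = a r] for a row
   [r], and [rho a = (r a) a = (\tr rho) a]. *)
Lemma column_not_parallel n (rho : 'M[C]_n) (L : C) (a : 'cV_n) :
  \tr rho = 1 -> L != 1 -> a != 0 -> rho *m a = L *: a ->
  exists i, forall c, rho *m delta_mx i 0 != c *: a.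
Proof.
move=> tr1 L_n1 a_nz rho_a.
have [k a_k] : exists k, a k 0 != 0.
  apply/existsP; apply: contraR a_nz => /existsPn a0.
  by apply/eqP/matrixP => i j; rewrite [j]ord1 mxE; apply/eqP/negPn/a0.
pose r i := rho k i / a k 0.
have [i col_i | parallel] := pickP (fun i => rho *m delta_mx i 0 != r i *: a).
  exists i => c; apply: contraNneq col_i => col_c.
  suff -> : r i = c by rewrite col_c.
  by move/matrixP/(_ k 0): col_c; rewrite -colE !mxE /r => ->; rewrite mulfK.
have rhoE j i : rho j i = r i * a j 0.
  by have /negbFE/eqP := parallel i; rewrite -colE => /matrixP/(_ j 0); rewrite !mxE.
suff : rho *m a = a.
  rewrite rho_a => /eqP; rewrite -subr_eq0 -{2}(scale1r a) -scalerBl scaler_eq0.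
  by rewrite subr_eq0 (negbTE L_n1) (negbTE a_nz).
apply/matrixP => j k'; rewrite [k']ord1 mxE -[RHS]mulr1 -tr1 mulr_sumr.
by apply: eq_bigr => i _; rewrite !rhoE; ring.
Qed.

Lemma density_range_rank2 n (rho : 'M[C]_n) (lam : R) :
  is_density rho -> root (char_poly rho) (real_complex R lam) -> lam != 0 -> lam != 1 ->
  exists y1 y2 : 'cV[C]_n, rho *m y1 != 0 /\ forall c, rho *m y2 != c *: (rho *m y1).
Proof.
case=> rho_herm _ tr1 root_lam lam_nz lam_n1.
have L_nz : real_complex R lam != 0.
  by rewrite -(rmorph0 (real_complex R)) (inj_eq (@complexI _)).
have [a a_nz rho_a] : exists2 a : 'cV_n, a != 0 & rho *m a = real_complex R lam *: a.
  by apply: herm_eigenvector; rewrite ?eigenvalue_root_char //; exact: conjc_real.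
have [|i indep] := column_not_parallel tr1 _ a_nz rho_a.
  by rewrite -(rmorph1 (real_complex R)) (inj_eq (@complexI _)).
exists ((real_complex R lam)^-1 *: a), (delta_mx i 0).
by rewrite -scalemxAr rho_a scalerA mulVf // scale1r.
Qed.

End DensityRange.

Unset Implicit Arguments. Set Strict Implicit. Set Printing Implicit Defensive.

Theorem theorem1 (R : realType) (lam : R) :
  2^-1 <= lam -> lam < 1 ->
  ~ exists rho : 'M[R[i]]_(2 * 2),
      maximally_entangled_in (S_spec lam (1 - lam) 0 0) rho.
Proof.
move=> lam_ge lam_lt1 [rho [[rho_dens rho_cp] max_ent]].
have lam_gt0 : 0 < lam by apply: lt_le_trans lam_ge; rewrite invr_gt0 ltr0n.
have lam01 : 0 <= lam <= 1 by rewrite !ltW.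
have lam_nz : lam != 0 by rewrite gt_eqF.
have lam_n1 : lam != 1 by rewrite lt_eqF.
have [? [/(is_LOCC_kraus rho)[sB sBE] bellE]] := max_ent _ (sigma_bell_spec lam01).
have [? [/(is_LOCC_kraus rho)[sP sPE] prodE]] := max_ent _ (sigma_prod_spec lam01).
rewrite bellE in sBE; rewrite prodE in sPE.
have root_lam : root (char_poly rho) (real_complex R lam).
  by rewrite rho_cp root_prod_XsubC mem_head.
have [y1 [y2 [v1_nz indep]]] := density_range_rank2 rho_dens root_lam lam_nz lam_n1.
case: rho_dens => rho_herm rho_psd _.
have := detgram_range_prod rho_herm rho_psd sPE lam_n1 v1_nz indep.
by rewrite (detgram_range_bell rho_herm rho_psd sBE) // eqxx.
Qed.
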